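(* Let $D$ be a Euclidean domain with fraction field $K$. Then $D$ is Bonaccian. More precisely, if $f$ is any Euclidean function on $D$ and $a,b \in D$ are nonzero with $f(a) \leq f(b)$, then $a/b$ is $D$-Egyptian.
   Context: A Euclidean function on an integral domain $D$ is a function $f: D\setminus\{0\} \to \mathbb{Z}$ such that for all nonzero $a,b \in D$: (1) $f(ab) \geq f(a)$, and (2) there exist $q,r \in D$ with $b = aq + r$ and either $r=0$ or $f(r) < f(a)$. A Euclidean domain is an integral domain admitting a Euclidean function. An element of $K$ is $D$-Egyptian if it is a sum of reciprocals of distinct nonzero elements of $D$. $D$ is Bonaccian if for every nonzero $\alpha \in K$, either $\alpha$ or $\alpha^{-1}$ is $D$-Egyptian. *)

From mathcomp Require Import all_boot all_order all_algebra.
Set Implicit Arguments. Unset Strict Implicit. Unset Printing Implicit Defensive.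
Import Order.TTheory GRing.Theory Num.Theory.
Local Open Scope ring_scope.

Definition toK (D : idomainType) (x : D) : {fraction D} := @FracField.tofrac D x.

(* Euclidean function f : D \ {0} -> Z (values of f at 0 are irrelevant). *)
Definition euclidean_fun (D : idomainType) (f : D -> int) : Prop :=
  (forall a b : D, a != 0 -> b != 0 -> f a <= f (a * b)) /\
  (forall a b : D, a != 0 -> b != 0 ->
     exists q r : D, b = a * q + r /\ (r = 0 \/ f r < f a)).

Definition euclidean_domain (D : idomainType) : Prop :=
  exists f : D -> int, euclidean_fun f.

Definition egyptian (D : idomainType) (alpha : {fraction D}) : Prop :=
  exists s : seq D, uniq s /\ all (fun d => d != 0) s /\
    alpha = \sum_(d <- s) (toK d)^-1.

Definition bonaccian (D : idomainType) : Prop :=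
  forall alpha : {fraction D}, alpha != 0 -> egyptian alpha \/ egyptian alpha^-1.

From mathcomp Require Import all_boot all_order all_algebra.
From mathcomp Require Import boolp zify ring lra.
Set Implicit Arguments. Unset Strict Implicit. Unset Printing Implicit Defensive.
Import Order.TTheory GRing.Theory Num.Theory.
Local Open Scope ring_scope.

(* Dividing b by a as b = a q + r gives a/b = 1/q + (-r)/(b q), where
   f(-r) = f(r) < f(a) <= f(b q); iterating this greedy step, which stops since
   f(a) decreases and is bounded below by f(1), writes a/b as a sum of
   reciprocals of nonzero elements, possibly with repetitions.
   Repetitions are removed one reciprocal 1/d at a time. If 2 is zero or a unit,
   two copies of 1/d merge into 0 or into 1/(d/2). Otherwise D has
   characteristic 0: the terms 1/e with e commensurable with d (e m = d n for
   nonzero integers m, n) add up with 1/d to rho/d for a rational rho, and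
   writing rho as a sum of reciprocals of distinct integers k (harmonic series
   plus the Fibonacci-Sylvester greedy algorithm) replaces them by the distinct
   terms 1/(k d). These are commensurable with d and the remaining terms are
   not, so no repetition is created. *)

Definition egyptian_above (M : nat) (x : rat) : Prop :=
  exists E : seq nat, [/\ uniq E, all (fun k => M < k)%N E &
    x = \sum_(k <- E) (k%:R)^-1].

Lemma egyptian_above0 (M : nat) : egyptian_above M 0.
Proof. by exists [::]; rewrite big_nil. Qed.

Lemma egyptian_aboveW (M N : nat) (x : rat) :
  (M <= N)%N -> egyptian_above N x -> egyptian_above M x.
Proof.
move=> le_MN [E [uE gtE ->]]; exists E; split=> //.
by apply: sub_all gtE => k; apply: leq_trans.
Qed.

Lemma egyptian_aboveVD (M k : nat) (x : rat) :
  (M < k)%N -> egyptian_above k x -> egyptian_above M (k%:R^-1 + x).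
Proof.
move=> lt_Mk [E [uE gtE ->]]; exists (k :: E); split.
- by rewrite /= uE andbT; apply/negP => /(allP gtE); rewrite ltnn.
- by rewrite /= lt_Mk; apply: sub_all gtE => j; apply: ltn_trans.
- by rewrite big_cons.
Qed.

Lemma sylvester_egyptian_above (M p q : nat) :
  (0 < M)%N -> (p * M < q)%N -> egyptian_above M (p%:R / q%:R).
Proof.
elim/ltn_ind: p => p IH in M q *; move=> M_gt0 lt_pM_q.
have [->|p_gt0] := posnP p; first by rewrite mul0r; apply: egyptian_above0.
(* k is the least integer with q <= p * k. *)
pose k := (q.-1 %/ p).+1.
have lt_pk_qp : (p * k < q + p)%N by rewrite /k; lia.
have le_q_pk : (q <= p * k)%N by rewrite /k; lia.
clearbody k.
have lt_Mk : (M < k)%N by nia.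
have -> : p%:R / q%:R = k%:R^-1 + (p * k - q)%:R / (q * k)%:R :> rat.
  rewrite natrB // !natrM; field.
  by rewrite !pnatr_eq0 -!lt0n; apply/andP; split; lia.
apply: egyptian_aboveVD (IH _ _ _ _ _ _) => //; [lia | lia | nia].
Qed.

Definition harmonic (M B : nat) : rat := \sum_(i < B) ((M + i).+1%:R)^-1.

Lemma harmonic_ge0 (M B : nat) : 0 <= harmonic M B.
Proof. by apply: sumr_ge0 => i _; rewrite invr_ge0 ler0n. Qed.

Lemma harmonicS (M B : nat) : harmonic M B.+1 = (M.+1%:R)^-1 + harmonic M.+1 B.
Proof.
rewrite /harmonic big_ord_recl addn0; congr (_ + _).
by apply: eq_bigr => i _; rewrite /bump /= addSnnS.
Qed.

Lemma harmonicD (M B C : nat) : harmonic M (B + C) = harmonic M B + harmonic (M + B) C.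
Proof. by rewrite /harmonic big_split_ord; under [X in _ + X]eq_bigr do rewrite -addnA. Qed.

Lemma harmonic_half (N : nat) : 1 / 2 <= harmonic N N.+1.
Proof.
rewrite /harmonic.
have -> : 1 / 2 = \sum_(i < N.+1) ((N.+1 * 2)%:R)^-1 :> rat.
  by rewrite sumr_const card_ord -mulr_natr natrM; field; rewrite nat1r pnatr_eq0.
apply: ler_sum => i _; rewrite lef_pV2 ?posrE ?ltr0n ?muln_gt0 // ler_nat.
by have := ltn_ord i; lia.
Qed.

Lemma harmonic_unbounded (M n : nat) : exists B, n%:R / 2 <= harmonic M B.
Proof.
elim: n => [|n [B leB]]; first by exists 0%N; rewrite mul0r harmonic_ge0.
exists (B + (M + B).+1)%N; rewrite harmonicD.
by have := harmonic_half (M + B); rewrite -(natr1 n); lra.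
Qed.

Lemma harmonic_egyptian_above (B M p q : nat) : (0 < q)%N ->
  p%:R / q%:R <= harmonic M B -> egyptian_above M (p%:R / q%:R).
Proof.
elim: B => [|B IH] in M p q *; move=> q_gt0 le_pq.
  have -> : p%:R / q%:R = 0 :> rat.
    by apply/eqP; rewrite eq_le divr_ge0 ?andbT //; rewrite /harmonic big_ord0 in le_pq.
  exact: egyptian_above0.
have [lt_pM_q|le_q_pM] := ltnP (p * M.+1) q.
  exact: egyptian_aboveW (leqnSn M) (sylvester_egyptian_above _ lt_pM_q).
have def_pq : p%:R / q%:R = M.+1%:R^-1 + (p * M.+1 - q)%:R / (q * M.+1)%:R :> rat.
  by rewrite natrB // !natrM; field; rewrite nat1r !pnatr_eq0 /= -lt0n.
rewrite def_pq harmonicS lerD2l in le_pq *.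
by apply: egyptian_aboveVD (IH _ _ _ _ le_pq); rewrite // muln_gt0 q_gt0.
Qed.

Lemma egyptian_above_ge0 (x : rat) : 0 <= x -> egyptian_above 0 x.
Proof.
move=> x_ge0; have [B le_xB] := harmonic_unbounded 0 (2 * `|numq x|).
have def_x : x = `|numq x|%:R / `|denq x|%:R.
  by rewrite !natr_absz !ger0_norm ?divq_num_den ?numq_ge0.
rewrite def_x; apply: (harmonic_egyptian_above _ (le_trans _ le_xB)).
  by rewrite absz_gt0 denq_neq0.
rewrite natrM mulrAC divff ?pnatr_eq0 // mul1r ler_pdivrMr ?ltr0n ?absz_gt0 ?denq_neq0 //.
by rewrite ler_peMr ?ler0n // ler1n absz_gt0 denq_neq0.
Qed.

Lemma rat_egyptian (x : rat) : exists E : seq int,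
  [/\ uniq E, all (fun k => k != 0) E & x = \sum_(k <- E) (k%:~R)^-1].
Proof.
wlog x_ge0 : x / 0 <= x.
  move=> nonneg; have [/nonneg //|/ltW] := leP 0 x.
  rewrite -oppr_ge0 => /nonneg [E [uE nzE def_x]].
  exists (map -%R E); split.
  - by rewrite map_inj_uniq //; apply: oppr_inj.
  - by rewrite all_map; apply: sub_all nzE => k; rewrite /= oppr_eq0.
  - by rewrite big_map -[x]opprK def_x -sumrN; apply: eq_bigr => k _; rewrite mulrNz invrN.
have [E [uE posE def_x]] := egyptian_above_ge0 x_ge0.
exists (map Posz E); split.
- by rewrite map_inj_uniq // => m n [].
- by rewrite all_map; apply: sub_all posE => k; rewrite /= -lt0n.
- by rewrite big_map def_x.
Qed.

Lemma intr_eq0_pchar0 (R : idomainType) (z : int) :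
  [pchar R] =i pred0 -> (z%:~R == 0 :> R) = (z == 0).
Proof.
move=> /pcharf0P R0; case: z => n; first by rewrite R0.
by rewrite NegzE mulrNz oppr_eq0 R0.
Qed.

Definition commensurable (V : zmodType) (x y : V) : Prop :=
  exists m n : int, [/\ m != 0, n != 0 & x *~ m = y *~ n].

(* MathComp makes ratr a ring morphism only into a numFieldType; characteristic
   0 is enough. *)
Section Pchar0Field.
Variable F : fieldType.
Hypothesis F0 : [pchar F] =i pred0.

Lemma ratr_frac_pchar0 (m n : int) : ratr (m%:~R / n%:~R) = m%:~R / n%:~R :> F.
Proof.
have [->|n0] := eqVneq n 0; first by rewrite !invr0 !mulr0 (ratr_nat _ 0).
set x : rat := m%:~R / n%:~R.
have den0 : (denq x)%:~R != 0 :> F by rewrite intr_eq0_pchar0 ?denq_neq0.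
rewrite /ratr; apply/eqP; rewrite eqr_div ?intr_eq0_pchar0 //.
have def_nx : numq x * n = m * denq x.
  apply: (intr_inj (R := rat)); rewrite !rmorphM /= numqE /x mulrAC divfK //.
  by rewrite intr_eq0.
by rewrite -!rmorphM /= def_nx.
Qed.

Lemma ratrD_pchar0 (x y : rat) : ratr (x + y) = ratr x + ratr y :> F.
Proof.
have den0 (z : rat) : (denq z)%:~R != 0 :> F by rewrite intr_eq0_pchar0 ?denq_neq0.
have Qden0 (z : rat) : (denq z)%:~R != 0 :> rat by rewrite intr_eq0 denq_neq0.
have -> : x + y = (numq x * denq y + numq y * denq x)%:~R / (denq x * denq y)%:~R.
  by rewrite !rmorphD !rmorphM /= !numqE; field; rewrite !Qden0.
rewrite ratr_frac_pchar0 /ratr !rmorphD !rmorphM /=; field.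
by rewrite !den0.
Qed.

Lemma ratr_sum_pchar0 (I : Type) (r : seq I) (G : I -> rat) :
  ratr (\sum_(i <- r) G i) = \sum_(i <- r) ratr (G i) :> F.
Proof. exact: (big_morph _ ratrD_pchar0 (ratr_nat _ 0)). Qed.

Lemma ratrV_int_pchar0 (k : int) : ratr (k%:~R)^-1 = (k%:~R)^-1 :> F.
Proof. by have := ratr_frac_pchar0 1 k; rewrite !mul1r. Qed.

Lemma sumV_commensurable (d : F) (t : seq F) : d != 0 ->
  {in t, forall e, commensurable e d} ->
  exists rho : rat, \sum_(e <- t) e^-1 = ratr rho / d.
Proof.
move=> d0; elim: t => [|e t IH] comm_t.
  by exists 0; rewrite big_nil (ratr_nat _ 0) mul0r.
have [|rho def_rho] := IH; first by move=> x xt; apply: comm_t; rewrite inE xt orbT.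
have [m [n [m0 n0 emn]]] := comm_t e (mem_head e t).
have [Fm0 Fn0] : m%:~R != 0 :> F /\ n%:~R != 0 :> F by rewrite !intr_eq0_pchar0.
have -> : e = d * n%:~R / m%:~R by rewrite mulrzr -emn -mulrzr mulfK.
exists (m%:~R / n%:~R + rho).
rewrite big_cons def_rho ratrD_pchar0 ratr_frac_pchar0; field.
by rewrite Fm0 Fn0 d0.
Qed.

End Pchar0Field.

Lemma pchar0_fraction (D : idomainType) :
  [pchar D] =i pred0 -> [pchar {fraction D}] =i pred0.
Proof.
move=> /pcharf0P D0; apply/pcharf0P => n.
by rewrite -(rmorph_nat (@FracField.tofrac D)) tofrac_eq0 D0.
Qed.

Lemma pchar_two_eq0_or_unit (R : comUnitRingType) (p : nat) :
  p \in [pchar R] -> (2%:R == 0 :> R) || ((2%:R : R) \is a GRing.unit).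
Proof.
move=> pchar_p; have [p_pr _] := andP pchar_p.
have [p2|p_odd] := even_prime p_pr; first by rewrite -p2 (pcharf0 pchar_p) eqxx.
apply/orP; right; apply/unitrPr; exists (p.+1./2)%:R.
have two_half : (2 * p.+1./2)%N = p.+1.
  by rewrite mul2n -[RHS]odd_double_half /= p_odd.
by rewrite -natrM two_half -natr1 (pcharf0 pchar_p) add0r.
Qed.

Section EgyptianInsertion.
Variable D : idomainType.
Implicit Types (x : {fraction D}) (d : D) (s : seq D).

Lemma egyptian0 : egyptian (0 : {fraction D}).
Proof. by exists [::]; rewrite big_nil. Qed.

Lemma egyptianDV_two x d :
  (2%:R == 0 :> D) || ((2%:R : D) \is a GRing.unit) ->
  egyptian x -> d != 0 -> egyptian (x + (toK d)^-1).
Proof.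
move=> two [s [us [nzs ->]]]; have [n] := ubnP (size s).
elim: n => // n IH in s d us nzs *; move=> lt_sn d0.
have [dS|dS] := boolP (d \in s); last first.
  by exists (d :: s); rewrite /= dS us d0 nzs big_cons addrC.
have nz_rem : all (fun e => e != 0) (rem d s).
  by apply/allP => e /mem_rem /(allP nzs).
rewrite (big_rem _ dS) addrAC -mulr2n addrC.
case/orP: two => [/eqP two0|two_unit].
  exists (rem d s); do !split; rewrite ?rem_uniq //.
  by rewrite -mulr_natr -(rmorph_nat (@FracField.tofrac D)) two0 rmorph0 mulr0 addr0.
have d20 : d / 2%:R != 0.
  by rewrite mulf_neq0 // invr_eq0; apply: contraTneq two_unit => ->; rewrite unitr0.
have -> : (toK d)^-1 *+ 2 = (toK (d / 2%:R))^-1.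
  by rewrite /toK rmorphM rmorphV //= rmorph_nat invfM invrK mulr_natr.
apply: IH; rewrite ?rem_uniq // size_rem //.
by case: s dS lt_sn {us nzs nz_rem}.
Qed.

Lemma egyptianDV_pchar0 x d : [pchar D] =i pred0 ->
  egyptian x -> d != 0 -> egyptian (x + (toK d)^-1).
Proof.
move=> D0 [s [us [nzs ->]]] d0; have K0 := pchar0_fraction D0.
have Kd0 : toK d != 0 by rewrite tofrac_eq0.
pose near e := `[< commensurable (toK e) (toK d) >].
have [rho def_rho] : exists rho : rat,
    \sum_(e <- s | near e) (toK e)^-1 = ratr rho / toK d.
  rewrite -big_filter -(big_map (@toK D) xpredT (fun y => y^-1)).
  apply: sumV_commensurable => // y /mapP [e].
  by rewrite mem_filter => /andP [/asboolP near_e _] ->.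
have [E [uE nzE def_E]] := rat_egyptian (1 + rho).
have dk0 k : k != 0 -> d *~ k != 0.
  by move=> k0; rewrite -mulrzr mulf_neq0 // intr_eq0_pchar0.
exists (map (fun k => d *~ k) E ++ [seq e <- s | ~~ near e]); split; last split.
- rewrite cat_uniq filter_uniq // andbT map_inj_in_uniq ?uE /=; last first.
    move=> k j _ _ djk; apply/eqP; rewrite -subr_eq0.
    by apply/negPn/negP => /dk0; rewrite mulrzBr djk subrr eqxx.
  apply/hasPn => e; rewrite mem_filter => /andP [/asboolPn far_e _].
  apply/mapP => -[k kE def_e]; apply: far_e; exists 1, k; split => //.
    exact: (allP nzE).
  by rewrite def_e /toK rmorphMz.
- rewrite all_cat all_map all_filter; apply/andP; split.
    by apply: sub_all nzE => k /dk0.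
  by apply: sub_all nzs => e e0; apply/implyP.
rewrite big_cat big_map big_filter (bigID near) /= def_rho addrAC; congr (_ + _).
have -> : \sum_(k <- E) (toK (d *~ k))^-1 = (toK d)^-1 * ratr (1 + rho).
  rewrite def_E ratr_sum_pchar0 // mulr_sumr.
  by apply: eq_bigr => k _; rewrite ratrV_int_pchar0 // /toK rmorphMz -mulrzr invfM mulrC.
by rewrite ratrD_pchar0 // (ratr_nat _ 1) mulrDr mulr1 mulrC addrC.
Qed.

Lemma egyptianDV x d : egyptian x -> d != 0 -> egyptian (x + (toK d)^-1).
Proof.
have [two|two'] := boolP ((2%:R == 0 :> D) || ((2%:R : D) \is a GRing.unit)).
  exact: egyptianDV_two.
apply: egyptianDV_pchar0 => p; apply/negbTE; apply: contra two'.
exact: pchar_two_eq0_or_unit.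
Qed.

Lemma egyptian_sumV s : all (fun d => d != 0) s -> egyptian (\sum_(d <- s) (toK d)^-1).
Proof.
elim: s => [_|d s IH /andP [d0 nzs]]; first by rewrite big_nil; apply: egyptian0.
by rewrite big_cons addrC; apply: egyptianDV (IH nzs) d0.
Qed.

End EgyptianInsertion.

Lemma div_quot_remE (F : fieldType) (a b q r : F) :
  b != 0 -> q != 0 -> b = a * q + r -> a / b = q^-1 + - r / (b * q).
Proof. by move=> b0 q0 def_b; rewrite def_b in b0 *; field; rewrite q0 b0. Qed.

Section EuclideanFunction.
Variables (D : idomainType) (f : D -> int).
Hypothesis f_eucl : euclidean_fun f.

Lemma euclidean_fun_ge1 (a : D) : a != 0 -> f 1 <= f a.
Proof. by move=> a0; have := f_eucl.1 1 a (oner_neq0 _) a0; rewrite mul1r. Qed.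

Lemma euclidean_funN (a : D) : a != 0 -> f (- a) = f a.
Proof.
have N1_neq0 : (-1 : D) != 0 by rewrite oppr_eq0 oner_neq0.
move=> a0; have Na0 : - a != 0 by rewrite oppr_eq0.
apply/eqP; rewrite eq_le.
have := f_eucl.1 (- a) (-1) Na0 N1_neq0.
have := f_eucl.1 a (-1) a0 N1_neq0.
by rewrite !mulrN1 opprK => -> ->.
Qed.

Lemma euclidean_ratio_sumV (a b : D) : a != 0 -> b != 0 -> f a <= f b ->
  exists2 s : seq D, all (fun d => d != 0) s &
    toK a / toK b = \sum_(d <- s) (toK d)^-1.
Proof.
have [n] := ubnP `|f a - f 1|%N; elim: n a b => // n IH a b lt_fa_n a0 b0 le_ab.
have [q [r [def_b r_small]]] := f_eucl.2 a b a0 b0.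
have q0 : q != 0.
  apply: contraTneq le_ab => q0; rewrite -ltNge.
  move: def_b r_small; rewrite q0 mulr0 add0r => <- [b_eq0|//].
  by rewrite b_eq0 eqxx in b0.
have [r0|r0] := eqVneq r 0.
  exists [:: q]; first by rewrite /= q0.
  by rewrite big_seq1 def_b r0 addr0 /toK rmorphM invfM mulrA divff ?mul1r ?tofrac_eq0.
have lt_ra : f r < f a by case: r_small => // /eqP; rewrite (negPf r0).
have bq0 : b * q != 0 by rewrite mulf_neq0.
have [s nz_s def_s] : exists2 s : seq D, all (fun d => d != 0) s &
    toK (- r) / toK (b * q) = \sum_(d <- s) (toK d)^-1.
  apply: IH; rewrite ?oppr_eq0 ?euclidean_funN //.
    by have := euclidean_fun_ge1 r0; lia.
  by have := f_eucl.1 b q b0 q0; lia.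
exists (q :: s); first by rewrite /= q0.
rewrite big_cons -def_s /toK rmorphM rmorphN /=.
by apply: div_quot_remE; rewrite ?tofrac_eq0 // def_b rmorphD rmorphM.
Qed.

End EuclideanFunction.

Lemma fraction_ratio (D : idomainType) (x : {fraction D}) :
  exists a b : D, b != 0 /\ x = toK a / toK b.
Proof.
elim/quotW: x => r; have r_d0 := denom_ratioP r.
exists (\n_r), (\d_r); split=> //; rewrite !piE; apply/eqmodP.
rewrite /= FracField.equivfE /FracField.mulf /FracField.invf.
by rewrite !numden_Ratio ?oner_neq0 ?mul1r //; apply/eqP; ring.
Qed.

Theorem theorem2p7 (D : idomainType) :
  (euclidean_domain D -> bonaccian D) /\
  (forall f : D -> int, euclidean_fun f ->
     forall a b : D, a != 0 -> b != 0 -> f a <= f b ->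
       egyptian (toK a / toK b)).
Proof.
have egyptian_div f : euclidean_fun f -> forall a b : D,
    a != 0 -> b != 0 -> f a <= f b -> egyptian (toK a / toK b).
  move=> f_eucl a b a0 b0 le_ab.
  have [s nzs ->] := euclidean_ratio_sumV f_eucl a0 b0 le_ab.
  exact: egyptian_sumV.
split=> // -[f f_eucl] x x0.
have [a [b [b0 def_x]]] := fraction_ratio x.
have a0 : a != 0 by apply: contraNneq x0 => a0; rewrite def_x a0 /toK rmorph0 mul0r.
rewrite def_x; have [le_ab|/ltW le_ba] := leP (f a) (f b).
  by left; apply: egyptian_div f_eucl a b a0 b0 le_ab.
by right; rewrite invf_div; apply: egyptian_div f_eucl b a b0 a0 le_ba.
Qed.
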